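(* Let $(V,g)$ be a four-dimensional Lorentzian vector space, $F\in\mathrm{Skew}(V)$, and $\sigma,\tau\in\mathbb{R}$. Let $\{\ell,k,e_2,e_3\}$ be a semi-null basis of $V$ such that $$F(k)=-2e_2,\qquad F(e_2)=-\ell+\tfrac{\sigma}{4}k,\qquad \langle F(\ell),F(\ell)\rangle=\tfrac{\sigma^2+\tau^2}{4}.$$ Then either the semi-null basis $\{\ell,k,e_2,e_3\}$ or the semi-null basis $\{\ell,k,e_2,-e_3\}$ (call it $\{\ell,k,e_2,e_3'\}$) satisfies $$F(\ell)=\tfrac{\sigma}{2}e_2+\tfrac{\tau}{2}e_3',\quad F(k)=-2e_2,\quad F(e_2)=-\ell+\tfrac{\sigma}{4}k,\quad F(e_3')=\tfrac{\tau}{4}k,$$ and both do whenever $\tau=0$.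
   Context: $\mathrm{Skew}(V)$ denotes the endomorphisms $F$ with $\langle e,F(e')\rangle=-\langle F(e),e'\rangle$ for all $e,e'$. A semi-null basis $\{\ell,k,e_2,e_3\}$ is a basis with $\ell,k$ null, $\langle \ell,k\rangle=-2$, $e_2,e_3$ unit spacelike, and all other inner products between distinct basis elements equal to zero. *)

From HB Require Import structures.
From mathcomp Require Import all_boot all_order all_algebra.
Set Implicit Arguments. Unset Strict Implicit. Unset Printing Implicit Defensive.
Import Order.TTheory GRing.Theory Num.Theory.
Local Open Scope ring_scope.

Section LorentzDefs.
Variables (R : realFieldType) (V : vectType R).

Definition sym_bilinear (g : V -> V -> R) : Prop :=
  (forall u v, g u v = g v u) /\
  (forall (a : R) u v w, g (a *: u + v) w = a * g u w + g v w).

Definition lorentzian4 (g : V -> V -> R) : Prop :=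
  sym_bilinear g /\
  exists b : 'I_4 -> V,
    basis_of fullv [seq b i | i <- enum 'I_4] /\
    forall i j : 'I_4, g (b i) (b j) =
      (if i == j then (if i == ord0 then -1 else 1) else 0).

Definition g_skew (g : V -> V -> R) (F : V -> V) : Prop :=
  linear F /\ forall e e', g e (F e') = - g (F e) e'.

Definition semi_null_basis (g : V -> V -> R) (l k e2 e3 : V) : Prop :=
  basis_of fullv [:: l; k; e2; e3] /\
  g l l = 0 /\ g k k = 0 /\ g l k = -2 /\
  g e2 e2 = 1 /\ g e3 e3 = 1 /\
  g l e2 = 0 /\ g l e3 = 0 /\ g k e2 = 0 /\ g k e3 = 0 /\ g e2 e3 = 0.

Definition normal_form (F : V -> V) (sigma tau : R) (l k e2 e3 : V) : Prop :=
  F l = (sigma / 2) *: e2 + (tau / 2) *: e3 /\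
  F k = (-2) *: e2 /\
  F e2 = - l + (sigma / 4) *: k /\
  F e3 = (tau / 4) *: k.

End LorentzDefs.

(* Expanding F l and F e3 in the semi-null basis, the skew-symmetry of F
   together with the prescribed values of F k and F e2 determines every
   coefficient except d = <e3, F l>:
     F l = (sigma/2) e2 + d e3,   F e3 = (d/2) k.
   Since <F l, F l> = sigma^2/4 + d^2, the norm condition forces d = tau/2 or
   d = -tau/2; replacing e3 by -e3 changes the sign of d and preserves
   semi-nullity, so one of the two bases is in normal form, and both are
   when tau = 0. *)

From HB Require Import structures.
From mathcomp Require Import all_boot all_order all_algebra.
From mathcomp Require Import reals.
From mathcomp Require Import ring lra.
Set Implicit Arguments. Unset Strict Implicit. Unset Printing Implicit Defensive.
Import Order.TTheory GRing.Theory Num.Theory.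
Local Open Scope ring_scope.

Section SymmetricBilinearForm.
Variables (R : realFieldType) (V : vectType R) (g : V -> V -> R).
Hypothesis g_symbil : sym_bilinear g.

Lemma formDl u v w : g (u + v) w = g u w + g v w.
Proof. by case: g_symbil => _ gl; rewrite -[u in LHS]scale1r gl mul1r. Qed.

Lemma form0l w : g 0 w = 0.
Proof. by apply: (addIr (g 0 w)); rewrite -formDl !add0r. Qed.

Lemma formZl a u w : g (a *: u) w = a * g u w.
Proof. by case: g_symbil => _ gl; rewrite -[_ *: u]addr0 gl form0l addr0. Qed.

Lemma formNl u w : g (- u) w = - g u w.
Proof. by rewrite -scaleN1r formZl mulN1r. Qed.

Lemma formDr u v w : g w (u + v) = g w u + g w v.
Proof. by case: g_symbil => gC _; rewrite !(gC w) formDl. Qed.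

Lemma formZr a u w : g w (a *: u) = a * g w u.
Proof. by case: g_symbil => gC _; rewrite !(gC w) formZl. Qed.

Lemma formNr u w : g w (- u) = - g w u.
Proof. by case: g_symbil => gC _; rewrite !(gC w) formNl. Qed.

Lemma semi_null_basisN {l k e2 e3} :
  semi_null_basis g l k e2 e3 -> semi_null_basis g l k e2 (- e3).
Proof.
move=> [bas [ll [kk [lk [e22 [e33 [le2 [le3 [ke2 [ke3 e23]]]]]]]]]].
rewrite /semi_null_basis !formNr formNl e33 le3 ke3 e23 opprK oppr0.
do !split=> //; move: bas; rewrite !basisEdim /= => /andP[span_full size_le].
rewrite size_le andbT (subv_trans span_full) //; apply/span_subvP => v.
rewrite !inE => /or4P[] /eqP->; try by rewrite memv_span // !inE eqxx ?orbT.
by rewrite -[e3 in X in X \in _]opprK memvN memv_span // !inE eqxx !orbT.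
Qed.

Lemma semi_null_coord {l k e2 e3} : semi_null_basis g l k e2 e3 ->
  forall v, v = (- g k v / 2) *: l + (- g l v / 2) *: k
                + g e2 v *: e2 + g e3 v *: e3.
Proof.
case: g_symbil => gC _.
move=> [bas [ll [kk [lk [e22 [e33 [le2 [le3 [ke2 [ke3 e23]]]]]]]]]] v.
have : v \in <<[:: l; k; e2; e3]>>%VS by rewrite (span_basis bas) memvf.
rewrite !span_cons span_nil addv0.
move=> /memv_addP [_ /vlineP [a ->] [_ /memv_addP [_ /vlineP [b ->]
  [_ /memv_addP [_ /vlineP [c ->] [_ /vlineP [d ->] ->]] ->]] ->]].
rewrite !formDr !formZr (gC k l) (gC e2 l) (gC e3 l) (gC e2 k) (gC e3 k)
  (gC e3 e2) ll kk lk e22 e33 le2 le3 ke2 ke3 e23.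
by rewrite !addrA; congr (_ *: _ + _ *: _ + _ *: _ + _ *: _); field.
Qed.

Section SkewEndomorphism.
Variable F : V -> V.
Hypothesis F_skew : forall e e', g e (F e') = - g (F e) e'.

Lemma form_skew_diag v : g v (F v) = 0.
Proof.
by case: g_symbil => gC _; have := F_skew v v; rewrite (gC (F v)); lra.
Qed.

Variables (sigma : R) (l k e2 e3 : V).
Hypotheses (basis_lke : semi_null_basis g l k e2 e3)
  (Fk : F k = (-2) *: e2) (Fe2 : F e2 = - l + (sigma / 4) *: k).

Let d := g e3 (F l).

Lemma Fl_coord : F l = (sigma / 2) *: e2 + d *: e3.
Proof.
case: g_symbil => gC _.
move: basis_lke => [_ [ll [_ [lk [_ [_ [le2 [_ [_ [_ _]]]]]]]]]].
have Fl_k : g k (F l) = 0 by rewrite F_skew Fk formZl (gC e2) le2 mulr0 oppr0.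
have Fl_e2 : g e2 (F l) = sigma / 2.
  by rewrite F_skew Fe2 formDl formNl formZl ll (gC k) lk; lra.
rewrite {1}(semi_null_coord basis_lke (F l)) Fl_k form_skew_diag Fl_e2.
by rewrite oppr0 mul0r !scale0r !add0r.
Qed.

Lemma Fe3_coord : F e3 = (d / 2) *: k.
Proof.
case: g_symbil => gC _.
move: basis_lke => [_ [_ [_ [_ [_ [_ [_ [le3 [_ [ke3 e23]]]]]]]]]].
have Fe3_l : g l (F e3) = - d by rewrite F_skew (gC (F l)).
have Fe3_k : g k (F e3) = 0 by rewrite F_skew Fk formZl e23 mulr0 oppr0.
have Fe3_e2 : g e2 (F e3) = 0.
  by rewrite F_skew Fe2 formDl formNl formZl le3 ke3 mulr0 oppr0 add0r oppr0.
rewrite {1}(semi_null_coord basis_lke (F e3)) Fe3_l Fe3_k Fe3_e2 form_skew_diag.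
by rewrite oppr0 mul0r opprK !scale0r add0r !addr0.
Qed.

Lemma form_Fl_Fl : g (F l) (F l) = (sigma / 2) ^+ 2 + d ^+ 2.
Proof.
case: g_symbil => gC _.
move: basis_lke => [_ [_ [_ [_ [e22 [e33 [_ [_ [_ [_ e23]]]]]]]]]].
rewrite Fl_coord !formDl !formZl !formDr !formZr e22 e33 e23 (gC e3) e23.
by rewrite !expr2; ring.
Qed.

Lemma skew_normal_form tau : d = tau / 2 -> normal_form F sigma tau l k e2 e3.
Proof.
move=> d_tau; rewrite /normal_form Fl_coord Fe3_coord d_tau.
by do !split=> //; congr (_ *: _); field.
Qed.

End SkewEndomorphism.
End SymmetricBilinearForm.

Theorem lemma3p1 (R : realType) (V : vectType R) (g : V -> V -> R)
  (F : V -> V) (sigma tau : R) (l k e2 e3 : V) :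
  lorentzian4 g ->
  g_skew g F ->
  semi_null_basis g l k e2 e3 ->
  F k = (-2) *: e2 ->
  F e2 = - l + (sigma / 4) *: k ->
  g (F l) (F l) = (sigma ^+ 2 + tau ^+ 2) / 4 ->
  (normal_form F sigma tau l k e2 e3 \/ normal_form F sigma tau l k e2 (- e3)) /\
  (tau = 0 ->
     normal_form F sigma tau l k e2 e3 /\ normal_form F sigma tau l k e2 (- e3)).
Proof.
move=> [g_symbil _] [_ F_skew] basis_lke Fk Fe2 FlFl.
have basis_lkeN := semi_null_basisN g_symbil basis_lke.
have normal_e3 := skew_normal_form g_symbil F_skew basis_lke Fk Fe2 (tau := tau).
have normal_e3N := skew_normal_form g_symbil F_skew basis_lkeN Fk Fe2 (tau := tau).
rewrite formNl // in normal_e3N.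
rewrite (form_Fl_Fl g_symbil F_skew basis_lke Fk Fe2) in FlFl.
set d := g e3 (F l) in normal_e3 normal_e3N FlFl.
have d_sq : d ^+ 2 = (tau / 2) ^+ 2 by lra.
split.
  move/eqP: d_sq; rewrite eqf_sqr => /orP[/eqP d_tau | /eqP d_Ntau].
    by left; apply: normal_e3.
  by right; apply: normal_e3N; rewrite d_Ntau opprK.
move=> tau0; have d0 : d = 0.
  by apply/eqP; rewrite -sqrf_eq0 d_sq tau0 mul0r expr0n.
by split; [apply: normal_e3 | apply: normal_e3N]; rewrite d0 tau0 mul0r ?oppr0.
Qed.
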